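(* Let $\alpha\in\mathbb{R}$, let $\mathbb{Q}[x]^+_{x=\alpha}=\{p\in\mathbb{Q}[x]: p(\alpha)>0\}$, and suppose $\mathbb{Q}[x]^+_{x=\alpha}=H_1\sqcup H_2$ with $H_1,H_2$ disjoint nonempty subsets, each closed under addition and multiplication. Then for every $N\ge 2$ and $i=1,2$, the set $H_i\cap\mathbb{Q}[x]^{<N}$ is not contained in any proper $\mathbb{Q}$-linear subspace of $\mathbb{Q}[x]^{<N}$, where $\mathbb{Q}[x]^{<N}$ denotes the $\mathbb{Q}$-vector space of rational polynomials of degree less than $N$. *)

From HB Require Import structures.
From mathcomp Require Import all_boot all_order all_algebra.
From mathcomp Require Import reals.
Set Implicit Arguments. Unset Strict Implicit. Unset Printing Implicit Defensive.
Import Order.TTheory GRing.Theory Num.Theory.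
Local Open Scope ring_scope.

Definition qeval (R : realType) (alpha : R) (p : {poly rat}) : R :=
  (map_poly ratr p).[alpha].

Definition posAt (R : realType) (alpha : R) (p : {poly rat}) : Prop :=
  0 < qeval alpha p.

(* Q[x]^{<N}: polynomials of degree < N, i.e. size <= N. *)
Definition polyLt (N : nat) (p : {poly rat}) : Prop := (size p <= N)%N.

Definition lin_subspace (S : {poly rat} -> Prop) : Prop :=
  S 0 /\ (forall p q, S p -> S q -> S (p + q)) /\
  (forall (c : rat) p, S p -> S (c *: p)).

Definition proper_subspace_lt (N : nat) (S : {poly rat} -> Prop) : Prop :=
  lin_subspace S /\ (forall p, S p -> polyLt N p) /\
  (exists p, polyLt N p /\ ~ S p).

From HB Require Import structures.
From mathcomp Require Import all_boot all_order all_algebra.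
From mathcomp Require Import reals lra.
From Stdlib Require Import Classical.

Set Implicit Arguments.
Unset Strict Implicit.
Unset Printing Implicit Defensive.
Import Order.TTheory GRing.Theory Num.Theory.
Local Open Scope ring_scope.

(* A rational polynomial p with p(alpha) > 0 is a sum of products of such
   polynomials of degree at most one: for a rational a < alpha there is a
   linear l with l(alpha) > 0, l(a) = p(a) and (p - l)(alpha) > 0, and then
   p = q (x - a) + l with q(alpha) > 0 and deg q < deg p.  So a part H_j
   containing the positive linear polynomials is everything and H_i is empty.
   If H_i lay in a proper subspace S of Q[x]^{<N}, every positive element of
   Q[x]^{<N} outside S would be in H_j; as every positive element of S is a
   sum of two positive elements outside S, H_j would contain all positive
   linear polynomials. *)

Lemma lin_subspaceB (S : {poly rat} -> Prop) p q :
  lin_subspace S -> S p -> S q -> S (p - q).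
Proof. by move=> [_ [SD SZ]] Sp Sq; rewrite -scaleN1r; apply/SD/SZ. Qed.

Section PositiveAtAlpha.

Variables (R : realType) (alpha : R).

Local Notation pos := (posAt alpha).

Lemma qevalD p q : qeval alpha (p + q) = qeval alpha p + qeval alpha q.
Proof. by rewrite /qeval rmorphD hornerD. Qed.

Lemma qevalB p q : qeval alpha (p - q) = qeval alpha p - qeval alpha q.
Proof. by rewrite /qeval rmorphB hornerD hornerN. Qed.

Lemma qevalM p q : qeval alpha (p * q) = qeval alpha p * qeval alpha q.
Proof. by rewrite /qeval rmorphM hornerM. Qed.

Lemma qevalC c : qeval alpha c%:P = ratr c.
Proof. by rewrite /qeval map_polyC hornerC. Qed.

Lemma qevalZ c p : qeval alpha (c *: p) = ratr c * qeval alpha p.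
Proof. by rewrite /qeval linearZ /= hornerZ. Qed.

Lemma qevalXsubC c : qeval alpha ('X - c%:P) = alpha - ratr c.
Proof. by rewrite qevalB qevalC /qeval map_polyX hornerX. Qed.

Lemma exists_rat_between (x y : R) : x < y -> exists q : rat, x < ratr q < y.
Proof. by move=> /rat_in_itvoo [q]; rewrite in_itv /=; exists q. Qed.

Lemma posAt_XsubC (a : rat) : ratr a < alpha -> pos ('X - a%:P).
Proof. by rewrite /posAt qevalXsubC subr_gt0. Qed.

Lemma posAt_mulXsubC_l (a : rat) q :
  ratr a < alpha -> pos (q * ('X - a%:P)) -> pos q.
Proof. by move=> /posAt_XsubC a_pos; rewrite /posAt qevalM pmulr_lgt0. Qed.

Lemma exists_linear_split (a : rat) p : ratr a < alpha -> pos p ->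
  exists l : {poly rat}, [/\ (size l <= 2)%N, pos l, pos (p - l) & root (p - l) a].
Proof.
move=> a_lt p_pos; have d_gt0 : 0 < alpha - ratr a by rewrite subr_gt0.
have [s /andP [s_gt s_lt]] : exists s : rat,
    - ratr p.[a] / (alpha - ratr a) < ratr s
    < (qeval alpha p - ratr p.[a]) / (alpha - ratr a).
  by apply: exists_rat_between; rewrite ltr_pM2r ?invr_gt0 //; move: p_pos; rewrite /posAt; lra.
rewrite ltr_pdivrMr // in s_gt; rewrite ltr_pdivlMr // in s_lt.
have ql : qeval alpha (s *: ('X - a%:P) + p.[a]%:P) = ratr s * (alpha - ratr a) + ratr p.[a].
  by rewrite qevalD qevalZ qevalXsubC qevalC.
exists (s *: ('X - a%:P) + p.[a]%:P); split.
- rewrite (leq_trans (size_polyD _ _)) // geq_max (leq_trans (size_polyC_leq1 _)) // andbT.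
  by rewrite (leq_trans (size_scale_leq _ _)) ?size_XsubC.
- by rewrite /posAt ql; lra.
- by rewrite /posAt qevalB ql; lra.
- by rewrite /root !hornerE subrr mulr0 add0r subrr.
Qed.

Lemma posAt_semiring_closure (B : {poly rat} -> Prop) :
  (forall p q, B p -> B q -> B (p + q)) ->
  (forall p q, B p -> B q -> B (p * q)) ->
  (forall p : {poly rat}, (size p <= 2)%N -> pos p -> B p) ->
  forall p, pos p -> B p.
Proof.
move=> addB mulB linB p; have [n] := ubnP (size p); elim: n p => // n IH p.
rewrite ltnS => size_p p_pos; have [size_le2|size_gt2] := leqP (size p) 2.
  exact: linB.
have [a /andP [_ a_lt]] : exists a : rat, alpha - 1 < ratr a < alpha.
  by apply: exists_rat_between; lra.
have [l [size_l l_pos g_pos g_root]] := exists_linear_split a_lt p_pos.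
set g := p - l in g_pos g_root.
have gE : g = g %/ ('X - a%:P) * ('X - a%:P) by rewrite divpK // dvdp_XsubCl.
have size_g : (size g <= size p)%N.
  rewrite (leq_trans (size_polyD _ _)) // geq_max leqnn size_polyN.
  exact: leq_trans size_l (ltnW size_gt2).
rewrite -(subrK l p) -/g gE; apply: addB (linB _ size_l l_pos).
apply: mulB (linB _ _ (posAt_XsubC a_lt)); last by rewrite size_XsubC.
apply: IH; last by rewrite gE in g_pos; exact: posAt_mulXsubC_l g_pos.
rewrite size_divp ?polyXsubC_eq0 // size_XsubC.
rewrite (leq_ltn_trans (leq_sub2r 1 size_g)) // subn1.
by rewrite (leq_trans _ size_p) // ltn_predL (ltn_trans _ size_gt2).
Qed.

Section ProperSubspace.

Variables (N : nat) (S : {poly rat} -> Prop).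
Hypotheses (N_gt0 : (0 < N)%N) (S_proper : proper_subspace_lt N S).

Lemma exists_posAt_notin_subspace : exists q, [/\ polyLt N q, pos q & ~ S q].
Proof.
have [S_lin [_ [p [p_lt p_notin]]]] := S_proper; have [_ [_ SZ]] := S_lin.
have C_lt c : polyLt N c%:P by exact: leq_trans (size_polyC_leq1 c) N_gt0.
have [S1|S1] := classic (S 1); last first.
  by exists 1; split; rewrite // -polyC1 // /posAt qevalC rmorph1 ltr01.
have [k /andP [k_gt _]] : exists k : rat,
    - qeval alpha p < ratr k < - qeval alpha p + 1.
  by apply: exists_rat_between; lra.
exists (p + k%:P); split.
- by rewrite /polyLt (leq_trans (size_polyD _ _)) // geq_max p_lt C_lt.
- by rewrite /posAt qevalD qevalC; lra.
- move=> Spk; apply: p_notin.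
  have -> : p = p + k%:P - k *: 1 by rewrite alg_polyC addrK.
  by apply: lin_subspaceB => //; apply: SZ.
Qed.

(* A positive p in S splits as (p - e q) + e q with q positive outside S and
   0 < e < p(alpha) / q(alpha); both summands are positive and outside S. *)
Lemma posAt_closure_from_outside (B : {poly rat} -> Prop) :
  (forall p q, B p -> B q -> B (p + q)) ->
  (forall p, polyLt N p -> pos p -> ~ S p -> B p) ->
  forall p, polyLt N p -> pos p -> B p.
Proof.
move=> addB outB p p_lt p_pos.
have [Sp|] := classic (S p); last exact: outB.
have [S_lin _] := S_proper; have [_ [_ SZ]] := S_lin.
have [q [q_lt q_pos q_notin]] := exists_posAt_notin_subspace.
have [e /andP [e_gt0 e_lt]] : exists e : rat,
    0 < (ratr e : R) < qeval alpha p / qeval alpha q.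
  by apply: exists_rat_between; rewrite divr_gt0.
rewrite ltr_pdivlMr // in e_lt.
have e_neq0 : e != 0 by apply: contraTneq e_gt0 => ->; rewrite rmorph0 ltxx.
have eq_notin : ~ S (e *: q).
  by move=> /(SZ e^-1); rewrite scalerA mulVf // scale1r.
have eq_lt : polyLt N (e *: q) by exact: leq_trans (size_scale_leq _ _) q_lt.
rewrite -(subrK (e *: q) p); apply: addB; apply: outB => //.
- by rewrite /polyLt (leq_trans (size_polyD _ _)) // geq_max p_lt size_polyN.
- by rewrite /posAt qevalB qevalZ; lra.
- by move=> S_diff; apply: eq_notin; rewrite -(subKr p (e *: q)); exact: lin_subspaceB.
- by rewrite /posAt qevalZ mulr_gt0.
Qed.

End ProperSubspace.

Lemma part_not_in_proper_subspace (A B : {poly rat} -> Prop)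
    (N : nat) (S : {poly rat} -> Prop) :
  (forall p, pos p <-> (A p \/ B p)) ->
  (forall p, A p -> B p -> False) ->
  (exists p, A p) ->
  (forall p q, B p -> B q -> B (p + q)) ->
  (forall p q, B p -> B q -> B (p * q)) ->
  (2 <= N)%N -> proper_subspace_lt N S ->
  ~ (forall p, A p -> polyLt N p -> S p).
Proof.
move=> part disj [p Ap] addB mulB N_ge2 S_proper A_in_S.
have N_gt0 : (0 < N)%N by exact: ltn_trans N_ge2.
have B_lt : forall p, polyLt N p -> pos p -> B p.
  apply: (posAt_closure_from_outside N_gt0 S_proper addB) => q q_lt.
  by case/part => // Aq /(_ (A_in_S q Aq q_lt)) [].
have B_all := posAt_semiring_closure addB mulB
  (fun q size_q => B_lt q (leq_trans size_q N_ge2)).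
exact: disj Ap (B_all p (proj2 (part p) (or_introl Ap))).
Qed.

End PositiveAtAlpha.

Theorem lemma4p5 (R : realType) (alpha : R)
  (H1 H2 : {poly rat} -> Prop)
  (hpart : forall p, posAt alpha p <-> (H1 p \/ H2 p))
  (hdisj : forall p, H1 p -> H2 p -> False)
  (hne1 : exists p, H1 p) (hne2 : exists p, H2 p)
  (hadd1 : forall p q, H1 p -> H1 q -> H1 (p + q))
  (hmul1 : forall p q, H1 p -> H1 q -> H1 (p * q))
  (hadd2 : forall p q, H2 p -> H2 q -> H2 (p + q))
  (hmul2 : forall p q, H2 p -> H2 q -> H2 (p * q)) :
  forall (N : nat), (2 <= N)%N ->
  forall H, (H = H1 \/ H = H2) ->
  ~ (exists S : {poly rat} -> Prop,
       proper_subspace_lt N S /\ (forall p, H p -> polyLt N p -> S p)).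
Proof.
move=> N N_ge2 H [->|->] [S [S_proper H_in_S]].
- exact: (part_not_in_proper_subspace hpart hdisj hne1 hadd2 hmul2 N_ge2 S_proper H_in_S).
- have hpart' p : posAt alpha p <-> (H2 p \/ H1 p) := iff_trans (hpart p) (or_comm _ _).
  have hdisj' p : H2 p -> H1 p -> False by move=> H2p H1p; exact: hdisj H1p H2p.
  exact: (part_not_in_proper_subspace hpart' hdisj' hne2 hadd1 hmul1 N_ge2 S_proper H_in_S).
Qed.
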